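(* Let $k\ge2$, $n\ge1$ be integers, let $\bar{\mathcal{P}}\in\mathbb{R}^{[k,n]}$ be a columnwise-substochastic tensor, $\mathbf{v}\in\mathbb{R}^n$ a stochastic vector and $\alpha\in[0,1)$ with $\varsigma:=(2k-3)\alpha(1-\alpha)^{-\frac{k-2}{k-1}}<1$. Choose $\mathbf{y}_0\in\mathbb{R}^n_+$ with $\mathbf{e}^T\mathbf{y}_0\le(1-\alpha)^{-\frac{1}{k-1}}$ and define iteratively, for $c=0,1,2,\dots$, $\mathbf{z}_c:=\alpha\bar{\mathcal{P}}\mathbf{y}_c^{k-1}+\mathbf{v}$ and $\mathbf{y}_{c+1}:=(\mathbf{e}^T\mathbf{z}_c)^{-\frac{k-2}{k-1}}\mathbf{z}_c$ (the tensor splitting algorithm). Then the sequence $\{\mathbf{y}_c\}$ converges globally to a nonnegative solution $\mathbf{y}_*$ of the MLPPR system $(\mathbf{e}^T\mathbf{y})^{k-2}\mathbf{y}-\alpha\bar{\mathcal{P}}\mathbf{y}^{k-1}=\mathbf{v}$ with a linear rate, namely $$\|\mathbf{y}_c-\mathbf{y}_*\|_1\le\varsigma^c\|\mathbf{y}_0-\mathbf{y}_*\|_1\quad\text{for all }c\ge0.$$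
   Context: For $\mathcal{P}\in\mathbb{R}^{[k,n]}$ (real tensors of order $k$, dimension $n$) and $\mathbf{y}\in\mathbb{R}^n$, $(\mathcal{P}\mathbf{y}^{k-1})_i=\sum_{i_2,\dots,i_k}p_{i i_2\dots i_k}y_{i_2}\cdots y_{i_k}$. $\bar{\mathcal{P}}$ is columnwise-substochastic if its entries are nonnegative and $\sum_{i}\bar p_{i i_2\dots i_k}\le1$ for all $i_2,\dots,i_k$. $\mathbf{e}$ is the all-ones vector; a stochastic vector is nonnegative with entries summing to $1$. The MLPPR system $(I\circ\mathbf{e}^{\circ(k-2)}-\alpha\bar{\mathcal{P}})\mathbf{y}^{k-1}=\mathbf{v}$ is exactly $(\mathbf{e}^T\mathbf{y})^{k-2}\mathbf{y}-\alpha\bar{\mathcal{P}}\mathbf{y}^{k-1}=\mathbf{v}$. *)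

From HB Require Import structures.
From mathcomp Require Import all_boot all_order all_algebra.
From mathcomp Require Import all_classical all_reals all_analysis.
Set Implicit Arguments. Unset Strict Implicit. Unset Printing Implicit Defensive.
Import Order.TTheory GRing.Theory Num.Theory.
Local Open Scope ring_scope.

(* A real tensor of order k and dimension n: entries p_{i i_2 ... i_k},
   the multi-index (i_2,...,i_k) being a function 'I_(k-1) -> 'I_n. *)
Definition tensor (R : realType) (k n : nat) := 'I_n -> {ffun 'I_(k.-1) -> 'I_n} -> R.

Definition tapply (R : realType) (k n : nat) (P : tensor R k n) (y : 'I_n -> R) : 'I_n -> R :=
  fun i => \sum_(t : {ffun 'I_(k.-1) -> 'I_n}) P i t * \prod_(j < k.-1) y (t j).

Definition sumv (R : realType) (n : nat) (y : 'I_n -> R) : R := \sum_(i < n) y i.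

Definition norm1 (R : realType) (n : nat) (y : 'I_n -> R) : R := \sum_(i < n) `|y i|.

Definition col_substochastic (R : realType) (k n : nat) (P : tensor R k n) : Prop :=
  (forall i t, 0 <= P i t) /\ (forall t, \sum_(i < n) P i t <= 1).

Definition stochastic (R : realType) (n : nat) (v : 'I_n -> R) : Prop :=
  (forall i, 0 <= v i) /\ sumv v = 1.

Definition mlppr_sol (R : realType) (k n : nat) (alpha : R) (P : tensor R k n)
  (v y : 'I_n -> R) : Prop :=
  forall i, (sumv y) ^+ (k - 2) * y i - alpha * tapply P y i = v i.

Fixpoint tsa (R : realType) (k n : nat) (alpha : R) (P : tensor R k n)
  (v y0 : 'I_n -> R) (c : nat) : 'I_n -> R :=
  match c with
  | 0 => y0
  | c'.+1 =>
      let y := tsa alpha P v y0 c' in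
      let z := fun i => alpha * tapply P y i + v i in
      fun i => powR (sumv z) (- ((k - 2)%:R / (k - 1)%:R)) * z i
  end.

(* Write T y := (e^T z)^(-a) z with z := alpha P y^(k-1) + v and a := (k-2)/(k-1), so that
   y_(c+1) = T y_c.  On the set D of nonnegative y with e^T y <= B := (1-alpha)^(-1/(k-1))
   one has 1 <= e^T z <= 1/(1-alpha) = B^(k-1), hence e^T (T y) = (e^T z)^(1/(k-1)) <= B:
   T maps D into itself.  On D, y |-> P y^(k-1) is (k-1) B^(k-2)-Lipschitz for the l1 norm
   (telescope the products of k-1 coordinates), and the normalisation z |-> (e^T z)^(-a) z
   is (1+a)-Lipschitz on {e^T z >= 1}.  As (1+a)(k-1) = 2k-3 and B^(k-2) = (1-alpha)^(-a),
   T is a contraction of ratio varsigma on D, and the Banach iteration argument gives a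
   fixed point of T, i.e. a solution of the MLPPR system, approached at rate varsigma^c. *)

From HB Require Import structures.
From mathcomp Require Import all_boot all_order all_algebra.
From mathcomp Require Import all_classical all_reals all_analysis.
From mathcomp Require Import ring lra zify.
Import Order.TTheory GRing.Theory Num.Theory.
Import numFieldNormedType.Exports.
Local Open Scope ring_scope.
Local Open Scope classical_set_scope.
Set Implicit Arguments.
Unset Strict Implicit.
Unset Printing Implicit Defensive.

Local Notation dist1 x y := (norm1 (fun i => x i - y i)).

Section geometric_bounds.
Variables (R : realType) (q : R).
Hypotheses (q_ge0 : 0 <= q) (q_lt1 : q < 1).

Lemma geometric_lt (C e : R) : 0 < e -> exists N, C * q ^+ N < e.
Proof.
move=> e_gt0; have q_norm : `|q| < 1 by rewrite ger0_norm.
have := @cvgr_lt _ _ _ _ _ _ (cvg_geometric C q_norm) _ e_gt0.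
by case=> N _ /(_ N (leqnn N)) ltN; exists N.
Qed.

Lemma le0_geometric (C x : R) : (forall c, x <= C * q ^+ c) -> x <= 0.
Proof.
move=> x_le; rewrite leNgt; apply/negP => /(geometric_lt C) [N].
by rewrite ltNge x_le.
Qed.

Lemma geometric_cauchy_cvg (u : nat -> R) (K : R) :
  (forall c d, (c <= d)%N -> `|u d - u c| <= K * q ^+ c) ->
  exists l, u @ \oo --> l /\ forall c, `|u c - l| <= K * q ^+ c.
Proof.
move=> u_cauchy.
have /cauchy_cvgP u_cvg : cauchy (u @ \oo).
  apply: cauchy_exP => e e_gt0; have [N ltN] := geometric_lt K e_gt0.
  exists (u N); apply: filterS (nbhs_infty_ge N) => c leNc /=.
  by rewrite -ball_normE /= distrC (le_lt_trans (u_cauchy _ _ leNc)).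
exists (lim (u @ \oo)); split => // c.
have dist_cvg : `|u d - u c| @[d --> \oo] --> `|lim (u @ \oo) - u c|.
  by apply: cvg_norm; apply: cvgB => //; exact: cvg_cst.
rewrite distrC; apply: ler_cvg_to dist_cvg (cvg_cst (K * q ^+ c)) _.
by apply: filterS (nbhs_infty_ge c) => d; exact: u_cauchy.
Qed.

End geometric_bounds.

Section l1_distance.
Variables (R : realType) (n : nat).
Implicit Types x y z : 'I_n -> R.

Lemma dist1C x y : dist1 x y = dist1 y x.
Proof. by apply: eq_bigr => i _; rewrite distrC. Qed.

Lemma dist1_ge0 x y : 0 <= dist1 x y.
Proof. exact: sumr_ge0. Qed.

Lemma dist1_triangle x y z : dist1 x z <= dist1 x y + dist1 y z.
Proof. by rewrite -big_split; apply: ler_sum => i _; exact: ler_distD. Qed.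

Lemma coord_le_dist1 x y i : `|x i - y i| <= dist1 x y.
Proof. by rewrite /norm1 (bigD1 i) //= lerDl sumr_ge0. Qed.

Lemma sumv_sub_le_dist1 x y : sumv y - sumv x <= dist1 x y.
Proof. by rewrite -sumrB; apply: ler_sum => i _; rewrite distrC ler_norm. Qed.

End l1_distance.

Section contraction_iterates.
Variables (R : realType) (n : nat) (q : R).
Variables (D : ('I_n -> R) -> Prop) (T : ('I_n -> R) -> 'I_n -> R).
Hypotheses (q_ge0 : 0 <= q) (q_lt1 : q < 1).
Hypothesis D_closed : forall y,
  (forall e : R, 0 < e -> exists2 x, D x & dist1 x y <= e) -> D y.
Hypothesis T_stable : forall y, D y -> D (T y).
Hypothesis T_contraction : forall {x y}, D x -> D y ->
  dist1 (T x) (T y) <= q * dist1 x y.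
Variable y : nat -> 'I_n -> R.
Hypotheses (y0_in_D : D (y 0)) (y_succ : forall c, y c.+1 = T (y c)).

Lemma iterates_in_D c : D (y c).
Proof. by elim: c => [|c IH] //; rewrite y_succ; exact: T_stable. Qed.

Let K := dist1 (y 1) (y 0) / (1 - q).

Lemma dist1_iterates c d : (c <= d)%N -> dist1 (y d) (y c) <= K * q ^+ c.
Proof.
have q1_gt0 : 0 < 1 - q by rewrite subr_gt0.
have step j : dist1 (y j.+1) (y j) <= dist1 (y 1) (y 0) * q ^+ j.
  elim: j => [|j IH]; first by rewrite mulr1.
  have := T_contraction (iterates_in_D j.+1) (iterates_in_D j).
  rewrite -!y_succ => /le_trans; apply.
  by rewrite exprS mulrCA ler_wpM2l.
have K_def : dist1 (y 1) (y 0) = K * (1 - q) by rewrite divfK // gt_eqF.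
(* [K (q^c - q^(c+j))] is [dist1 (y 1) (y 0)] times [q^c + ... + q^(c+j-1)] *)
suff telescoped j : dist1 (y (c + j)) (y c) <= K * (q ^+ c - q ^+ (c + j)).
  move=> /subnKC <-; apply: le_trans (telescoped _) _.
  apply: ler_wpM2l; first by rewrite divr_ge0 ?dist1_ge0 ?ltW.
  by rewrite gerBl exprn_ge0.
elim: j => [|j IH].
  by rewrite addn0 subrr mulr0 /norm1 big1 // => i _; rewrite subrr normr0.
apply: le_trans (dist1_triangle _ (y (c + j)) _) _.
rewrite addnS; apply: le_trans (lerD (step _) IH) _.
rewrite K_def exprS; lra.
Qed.

Lemma iterates_cvg_fixed_point : exists ys, [/\ D ys, forall i, T ys i = ys i,
  forall i, y c i @[c --> \oo] --> ys i &
  forall c, dist1 (y c) ys <= q ^+ c * dist1 (y 0) ys].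
Proof.
have coord_cvg i : exists l,
    y c i @[c --> \oo] --> l /\ forall c, `|y c i - l| <= K * q ^+ c.
  apply: (geometric_cauchy_cvg q_ge0 q_lt1) => c d cd.
  exact: le_trans (coord_le_dist1 _ _ i) (dist1_iterates cd).
have [ys ys_spec] := fin_all_exists coord_cvg.
have dist_ys c : dist1 (y c) ys <= n%:R * K * q ^+ c.
  apply: le_trans (ler_sum _ (fun i _ => (ys_spec i).2 c)) _.
  by rewrite sumr_const card_ord -mulrA mulr_natl.
have ys_in_D : D ys.
  apply: D_closed => e e_gt0.
  have [c ltc] := geometric_lt q_ge0 q_lt1 (n%:R * K) e_gt0.
  by exists (y c); [exact: iterates_in_D | exact: ltW (le_lt_trans (dist_ys c) ltc)].
have ys_fixed i : T ys i = ys i.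
  apply/eqP; rewrite -subr_eq0 -normr_le0.
  apply: (le0_geometric q_ge0 q_lt1 (C := q * (n%:R * K) + K * q)) => c.
  apply: le_trans (ler_distD (y c.+1 i) _ _) _; rewrite mulrDl; apply: lerD.
    rewrite y_succ; apply: le_trans (coord_le_dist1 _ _ i) _.
    apply: le_trans (T_contraction ys_in_D (iterates_in_D c)) _.
    by rewrite dist1C -mulrA ler_wpM2l.
  by apply: le_trans ((ys_spec i).2 c.+1) _; rewrite exprS mulrA.
exists ys; split => // [i|]; first exact: (ys_spec i).1.
elim=> [|c IH]; first by rewrite mul1r.
have -> : dist1 (y c.+1) ys = dist1 (T (y c)) (T ys).
  by apply: eq_bigr => i _; rewrite y_succ ys_fixed.
apply: le_trans (T_contraction (iterates_in_D c) ys_in_D) _.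
by rewrite exprS -mulrA ler_wpM2l.
Qed.

End contraction_iterates.

Lemma prod_sub_telescope (R : comPzRingType) m (a b : 'I_m -> R) :
  \prod_(l < m) a l - \prod_(l < m) b l =
  \sum_(j < m) \prod_(l < m)
     (if (l < j)%N then a l else if l == j then a l - b l else b l).
Proof.
pose hybrid j := \prod_(l < m) (if (l < j)%N then a l else b l).
have -> : \prod_(l < m) a l - \prod_(l < m) b l = hybrid m - hybrid 0%N.
  by congr (_ - _); apply: eq_bigr => l _; rewrite ?ltn_ord ?ltn0.
rewrite -telescope_sumr // big_mkord; apply: eq_bigr => j _.
rewrite /hybrid (bigD1 j) //= [X in _ - X](bigD1 j) //= [RHS](bigD1 j) //=.
rewrite ltnSn ltnn eqxx.
rewrite [X in a j * X](eq_bigr (fun l : 'I_m => if (l < j)%N then a l else b l)); last first.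
  by move=> l /negPf lj; rewrite ltnS leq_eqVlt (inj_eq val_inj) lj.
by rewrite -mulrBl; congr (_ * _); apply: eq_bigr => l /negPf ->.
Qed.

Section product_difference.
Variables (R : realType) (n m : nat) (B : R) (x y : 'I_n -> R).
Hypotheses (x_ge0 : forall i, 0 <= x i) (y_ge0 : forall i, 0 <= y i).
Hypotheses (sumv_x_le : sumv x <= B) (sumv_y_le : sumv y <= B).

Lemma sum_prod_sub_le :
  \sum_(t : {ffun 'I_m -> 'I_n}) `|\prod_(j < m) y (t j) - \prod_(j < m) x (t j)|
   <= m%:R * B ^+ m.-1 * dist1 y x.
Proof.
pose G (j l : 'I_m) i : R :=
  `|if (l < j)%N then y i else if l == j then y i - x i else x i|.
have sum_G_le (j l : 'I_m) : l != j -> \sum_(i < n) G j l i <= B.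
  move=> /negPf lj; rewrite /G lj.
  case: (l < j)%N; [apply: le_trans sumv_y_le|apply: le_trans sumv_x_le];
    by apply: ler_sum => i _; rewrite ger0_norm.
have -> : m%:R * B ^+ m.-1 * dist1 y x = \sum_(j < m) B ^+ m.-1 * dist1 y x.
  by rewrite sumr_const card_ord -mulrA mulr_natl.
apply: (@le_trans _ _
  (\sum_(t : {ffun 'I_m -> 'I_n}) \sum_(j < m) \prod_(l < m) G j l (t l))).
  apply: ler_sum => t _; rewrite prod_sub_telescope.
  by apply: le_trans (ler_norm_sum _ _ _) _; apply: ler_sum => j _; rewrite normr_prod.
rewrite exchange_big; apply: ler_sum => j _.
rewrite -(bigA_distr_bigA (fun l i => G j l i)) (bigD1 j) //= mulrC.
apply: ler_pM.
- by apply: prodr_ge0 => l _; apply: sumr_ge0 => i _; exact: normr_ge0.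
- by apply: sumr_ge0 => i _; exact: normr_ge0.
- apply: (@le_trans _ _ (\prod_(l < m | l != j) B)).
    apply: ler_prod => l lj; rewrite sum_G_le // andbT.
    by apply: sumr_ge0 => i _; exact: normr_ge0.
  by rewrite prodr_const cardC1 card_ord.
- by rewrite /G ltnn eqxx.
Qed.

End product_difference.

Section substochastic_tensor.
Variables (R : realType) (k n : nat) (P : tensor R k n).
Hypothesis P_substochastic : col_substochastic P.

Let P_ge0 i t : 0 <= P i t. Proof. by case: P_substochastic. Qed.
Let P_col_le1 t : \sum_(i < n) P i t <= 1. Proof. by case: P_substochastic. Qed.

Lemma tapply_ge0 y : (forall i, 0 <= y i) -> forall i, 0 <= tapply P y i.
Proof.
by move=> y_ge0 i; apply: sumr_ge0 => t _; rewrite mulr_ge0 ?prodr_ge0.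
Qed.

Lemma sumv_tapply_le y : (forall i, 0 <= y i) -> sumv (tapply P y) <= sumv y ^+ k.-1.
Proof.
move=> y_ge0; rewrite /sumv /tapply exchange_big /=.
have -> : (\sum_(i < n) y i) ^+ k.-1 = \prod_(j < k.-1) \sum_(i < n) y i.
  by rewrite prodr_const card_ord.
rewrite bigA_distr_bigA.
by apply: ler_sum => t _; rewrite -mulr_suml ler_piMl ?prodr_ge0.
Qed.

Lemma dist1_tapply_le B x y :
  (forall i, 0 <= x i) -> (forall i, 0 <= y i) -> sumv x <= B -> sumv y <= B ->
  dist1 (tapply P x) (tapply P y) <= k.-1%:R * B ^+ k.-2 * dist1 x y.
Proof.
move=> x_ge0 y_ge0 sumv_x_le sumv_y_le.
apply: le_trans (sum_prod_sub_le k.-1 y_ge0 x_ge0 sumv_y_le sumv_x_le).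
apply: (@le_trans _ _ (\sum_(i < n) \sum_(t : {ffun 'I_k.-1 -> 'I_n})
   P i t * `|\prod_(j < k.-1) x (t j) - \prod_(j < k.-1) y (t j)|)).
  apply: ler_sum => i _; rewrite -sumrB.
  apply: le_trans (ler_norm_sum _ _ _) _; apply: ler_sum => t _.
  by rewrite -mulrBr normrM ger0_norm.
rewrite exchange_big; apply: ler_sum => t _.
by rewrite -mulr_suml ler_piMl.
Qed.

End substochastic_tensor.

Section negative_powers.
Variables (R : realType) (a : R).
Hypothesis a_ge0 : 0 <= a.

Lemma ler_powRN (s t : R) : 0 < s -> s <= t -> t `^ (-a) <= s `^ (-a).
Proof.
move=> s_gt0 le_st; have t_gt0 := lt_le_trans s_gt0 le_st.
rewrite !powRN lef_pV2 ?posrE ?powR_gt0 //.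
exact: (ge0_ler_powR a_ge0 (ltW s_gt0) (ltW t_gt0) le_st).
Qed.

Lemma one_sub_powRN_le (x : R) : 1 <= x -> 1 - x `^ (-a) <= a * (x - 1).
Proof.
move=> x_ge1; have x_gt0 : 0 < x := lt_le_trans ltr01 x_ge1.
have ln_le : ln x <= x - 1.
  by have := expR_ge1Dx (ln x); rewrite lnK ?posrE // lerBrDl addrC.
have := expR_ge1Dx (- a * ln x); rewrite /powR gt_eqF // => exp_ge.
apply: le_trans (_ : a * ln x <= _); last exact: ler_wpM2l.
by rewrite lerBlDr -lerBlDl; apply: le_trans exp_ge; rewrite mulNr.
Qed.

(* mean-value estimate: on [s, t] the derivative of [x |-> x^(-a)] is at most [a / s] in size *)
Lemma powRN_sub_le (s t : R) : 1 <= s -> s <= t ->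
  (s `^ (-a) - t `^ (-a)) * s <= a * (t - s).
Proof.
move=> s_ge1 le_st; have s_gt0 : 0 < s := lt_le_trans ltr01 s_ge1.
have t_gt0 := lt_le_trans s_gt0 le_st.
have ratio_ge1 : 1 <= t / s by rewrite ler_pdivlMr // mul1r.
have t_split : t `^ (-a) = s `^ (-a) * (t / s) `^ (-a).
  by rewrite -powRM ?divr_ge0 ?ltW // mulrC divfK ?gt_eqF.
have s_pow_le1 : s `^ (-a) <= 1.
  by have := ler_powRN ltr01 s_ge1; rewrite powR1.
rewrite t_split -{1}(mulr1 (s `^ (-a))) -mulrBr.
apply: (@le_trans _ _ (a * (t / s - 1) * s)).
  apply: ler_wpM2r; first exact: ltW.
  apply: le_trans (one_sub_powRN_le ratio_ge1).
  rewrite ler_piMl ?powR_ge0 // subr_ge0.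
  by have := ler_powRN ltr01 ratio_ge1; rewrite powR1.
by rewrite -mulrA mulrBl divfK ?gt_eqF ?mul1r.
Qed.

Lemma dist1_powRN_scale_le n (z1 z2 : 'I_n -> R) :
  (forall i, 0 <= z1 i) -> (forall i, 0 <= z2 i) -> 1 <= sumv z1 -> 1 <= sumv z2 ->
  dist1 (fun i => sumv z1 `^ (-a) * z1 i) (fun i => sumv z2 `^ (-a) * z2 i)
    <= (1 + a) * dist1 z1 z2.
Proof.
wlog le_sums : z1 z2 / sumv z1 <= sumv z2 => [wlog_le|].
  move=> z1_ge0 z2_ge0 s1_ge1 s2_ge1; case: (leP (sumv z1) (sumv z2)) => [le12|/ltW le21].
    exact: wlog_le.
  by rewrite (dist1C (fun i => _ * z1 i)) (dist1C z1); apply: wlog_le.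
move=> z1_ge0 _ s1_ge1 s2_ge1.
set p1 := sumv z1 `^ (-a); set p2 := sumv z2 `^ (-a).
have p2_ge0 : 0 <= p2 by exact: powR_ge0.
have p2_le1 : p2 <= 1 by have := ler_powRN ltr01 s2_ge1; rewrite powR1.
have p2_le_p1 : p2 <= p1 by apply: ler_powRN; rewrite ?(lt_le_trans ltr01).
have sums_le := sumv_sub_le_dist1 z1 z2.
have dist_ge0 := dist1_ge0 z1 z2.
apply: (@le_trans _ _ (p2 * dist1 z1 z2 + (p1 - p2) * sumv z1)).
  rewrite mulr_sumr mulr_sumr -big_split /=; apply: ler_sum => i _.
  have -> : p1 * z1 i - p2 * z2 i = p2 * (z1 i - z2 i) + (p1 - p2) * z1 i by ring.
  apply: le_trans (ler_normD _ _) _.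
  have p12_ge0 : 0 <= p1 - p2 by rewrite subr_ge0.
  by rewrite !normrM (ger0_norm p2_ge0) (ger0_norm p12_ge0) (ger0_norm (z1_ge0 i)).
have := powRN_sub_le s1_ge1 le_sums; rewrite -/p1 -/p2.
have : a * (sumv z2 - sumv z1) <= a * dist1 z1 z2 by rewrite ler_wpM2l.
have : p2 * dist1 z1 z2 <= dist1 z1 z2 by rewrite ler_piMl.
lra.
Qed.

End negative_powers.

Section tensor_splitting.
Variables (R : realType) (k n : nat) (P : tensor R k n) (v : 'I_n -> R) (alpha : R).
Hypotheses (k_gt1 : (1 < k)%N) (P_substochastic : col_substochastic P).
Hypotheses (v_stochastic : stochastic v) (alpha_ge0 : 0 <= alpha) (alpha_lt1 : alpha < 1).

Definition tsa_rhs (y : 'I_n -> R) i := alpha * tapply P y i + v i.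
Definition tsa_exponent : R := (k - 2)%:R / (k - 1)%:R.
Definition tsa_step (y : 'I_n -> R) i :=
  sumv (tsa_rhs y) `^ (- tsa_exponent) * tsa_rhs y i.
Definition tsa_radius : R := (1 - alpha) `^ (- (1 / (k - 1)%:R)).
Definition tsa_domain (y : 'I_n -> R) := (forall i, 0 <= y i) /\ sumv y <= tsa_radius.
Definition tsa_rate : R := (2 * k - 3)%:R * alpha * (1 - alpha) `^ (- tsa_exponent).

Let k1_gt0 : 0 < (k - 1)%:R :> R. Proof. by rewrite ltr0n subn_gt0. Qed.
Let alpha1_gt0 : 0 < 1 - alpha. Proof. by rewrite subr_gt0. Qed.

Lemma tsa_exponent_ge0 : 0 <= tsa_exponent.
Proof. by rewrite divr_ge0. Qed.

Lemma one_sub_tsa_exponent : 1 - tsa_exponent = (k - 1)%:R^-1.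
Proof.
rewrite /tsa_exponent (_ : (k - 2 = (k - 1) - 1)%N); last by lia.
rewrite natrB ?subn_gt0 // mulrBl divff ?gt_eqF //.
by rewrite opprB addrC subrK div1r.
Qed.

Lemma rate_factorization :
  (2 * k - 3)%:R = (1 + tsa_exponent) * k.-1%:R :> R.
Proof.
have -> : (2 * k - 3 = (k - 1) + (k - 2))%N by lia.
by rewrite -subn1 natrD mulrDl mul1r /tsa_exponent divfK ?gt_eqF.
Qed.

Lemma tsa_radius_exp j : tsa_radius ^+ j = (1 - alpha) `^ (- (j%:R / (k - 1)%:R)).
Proof.
by rewrite -powR_mulrn ?powR_ge0 // -powRrM mulNr mul1r mulrC.
Qed.

Lemma tsa_radius_exp_km1 : tsa_radius ^+ k.-1 = (1 - alpha)^-1.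
Proof.
by rewrite tsa_radius_exp -subn1 divff ?gt_eqF // powR_inv1 ?ltW.
Qed.

Lemma tsa_radius_exp_km2 : tsa_radius ^+ k.-2 = (1 - alpha) `^ (- tsa_exponent).
Proof. by rewrite tsa_radius_exp -subn2. Qed.

Lemma tsa_rhs_ge0 y : (forall i, 0 <= y i) -> forall i, 0 <= tsa_rhs y i.
Proof.
move=> y_ge0 i; rewrite addr_ge0 ?mulr_ge0 ?tapply_ge0 //; by case: v_stochastic.
Qed.

Lemma sumv_tsa_rhs y : sumv (tsa_rhs y) = alpha * sumv (tapply P y) + 1.
Proof.
by rewrite /sumv big_split /= -mulr_sumr; case: v_stochastic => _ <-.
Qed.

Lemma sumv_tsa_rhs_ge1 y : (forall i, 0 <= y i) -> 1 <= sumv (tsa_rhs y).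
Proof.
move=> y_ge0; rewrite sumv_tsa_rhs lerDr mulr_ge0 // sumr_ge0 // => i _.
exact: tapply_ge0.
Qed.

Lemma sumv_tsa_rhs_le y : tsa_domain y -> sumv (tsa_rhs y) <= (1 - alpha)^-1.
Proof.
case=> y_ge0 sumv_y_le.
have sumv_tapply_le1 : sumv (tapply P y) <= (1 - alpha)^-1.
  apply: le_trans (sumv_tapply_le P_substochastic y_ge0) _.
  rewrite -tsa_radius_exp_km1 lerXn2r ?nnegrE ?powR_ge0 //.
  exact: sumr_ge0.
have -> : (1 - alpha)^-1 = alpha * (1 - alpha)^-1 + 1.
  by field; rewrite gt_eqF.
by rewrite sumv_tsa_rhs lerD2r ler_wpM2l.
Qed.

Lemma sumv_tsa_step y : (forall i, 0 <= y i) ->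
  sumv (tsa_step y) = sumv (tsa_rhs y) `^ (k - 1)%:R^-1.
Proof.
move=> y_ge0; have s_gt0 := lt_le_trans ltr01 (sumv_tsa_rhs_ge1 y_ge0).
rewrite /sumv -mulr_sumr -/(sumv (tsa_rhs y)) -{2}(powRr1 (ltW s_gt0)) -powRD.
  by rewrite addrC one_sub_tsa_exponent.
by rewrite (gt_eqF s_gt0) implybT.
Qed.

Lemma tsa_step_domain y : tsa_domain y -> tsa_domain (tsa_step y).
Proof.
move=> y_dom; have [y_ge0 _] := y_dom; split.
  by move=> i; rewrite mulr_ge0 ?powR_ge0 ?tsa_rhs_ge0.
have -> : tsa_radius = (1 - alpha)^-1 `^ (k - 1)%:R^-1.
  by rewrite -powR_inv1 ?ltW // -powRrM mulN1r /tsa_radius div1r.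
rewrite sumv_tsa_step //; apply: ge0_ler_powR.
- by rewrite invr_ge0 ltW.
- by rewrite nnegrE (le_trans ler01) ?sumv_tsa_rhs_ge1.
- by rewrite nnegrE invr_ge0 ltW.
- exact: sumv_tsa_rhs_le.
Qed.

Lemma tsa_step_contraction x y : tsa_domain x -> tsa_domain y ->
  dist1 (tsa_step x) (tsa_step y) <= tsa_rate * dist1 x y.
Proof.
move=> [x_ge0 sumv_x_le] [y_ge0 sumv_y_le].
apply: le_trans (dist1_powRN_scale_le tsa_exponent_ge0
  (tsa_rhs_ge0 x_ge0) (tsa_rhs_ge0 y_ge0)
  (sumv_tsa_rhs_ge1 x_ge0) (sumv_tsa_rhs_ge1 y_ge0)) _.
have -> : dist1 (tsa_rhs x) (tsa_rhs y) = alpha * dist1 (tapply P x) (tapply P y).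
  rewrite /norm1 mulr_sumr; apply: eq_bigr => i _.
  by rewrite -(ger0_norm alpha_ge0) -normrM /tsa_rhs; congr `|_|; ring.
have := dist1_tapply_le P_substochastic x_ge0 y_ge0 sumv_x_le sumv_y_le.
rewrite tsa_radius_exp_km2 /tsa_rate rate_factorization => tapply_le.
rewrite -!mulrA; apply: ler_wpM2l; first by rewrite addr_ge0 ?tsa_exponent_ge0.
by rewrite mulrCA; apply: ler_wpM2l => //; rewrite mulrA.
Qed.

Lemma tsa_domain_closed y :
  (forall e : R, 0 < e -> exists2 x, tsa_domain x & dist1 x y <= e) ->
  tsa_domain y.
Proof.
move=> approx; split.
  move=> i; apply/ler_addgt0Pr => e /approx [x [x_ge0 _] dist_le].
  have := coord_le_dist1 x y i; have := ler_norm (x i - y i); have := x_ge0 i.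
  lra.
apply/ler_addgt0Pr => e /approx [x [_ sumv_x_le] dist_le].
have := sumv_sub_le_dist1 x y; lra.
Qed.

Lemma tsa_fixed_point_mlppr y : (forall i, 0 <= y i) ->
  (forall i, tsa_step y i = y i) -> mlppr_sol alpha P v y.
Proof.
move=> y_ge0 y_fixed i.
set s := sumv (tsa_rhs y).
have s_gt0 : 0 < s := lt_le_trans ltr01 (sumv_tsa_rhs_ge1 y_ge0).
have sumv_y : sumv y = s `^ (k - 1)%:R^-1.
  by rewrite -sumv_tsa_step //; apply: eq_bigr => j _; rewrite y_fixed.
have sumv_y_exp : sumv y ^+ (k - 2) = s `^ tsa_exponent.
  by rewrite sumv_y -powR_mulrn ?powR_ge0 // -powRrM mulrC.
rewrite sumv_y_exp -y_fixed /tsa_step powRN mulrA mulfV ?gt_eqF ?powR_gt0 //.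
by rewrite mul1r /tsa_rhs addrC addKr.
Qed.

End tensor_splitting.

Theorem theorem4p2 (R : realType) (k n : nat) (hk : (2 <= k)%N) (hn : (1 <= n)%N)
  (P : tensor R k n) (v : 'I_n -> R) (alpha : R)
  (hP : col_substochastic P) (hv : stochastic v)
  (ha0 : 0 <= alpha) (ha1 : alpha < 1)
  (hvs : (2 * k - 3)%:R * alpha
           * powR (1 - alpha) (- ((k - 2)%:R / (k - 1)%:R)) < 1)
  (y0 : 'I_n -> R) (hy0 : forall i, 0 <= y0 i)
  (hy0s : sumv y0 <= powR (1 - alpha) (- (1 / (k - 1)%:R))) :
  let vs := (2 * k - 3)%:R * alpha * powR (1 - alpha) (- ((k - 2)%:R / (k - 1)%:R)) in
  exists ys : 'I_n -> R,
    (forall i, 0 <= ys i) /\ mlppr_sol alpha P v ys /\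
    (forall i, tsa alpha P v y0 c i @[c --> \oo] --> ys i) /\
    (forall c : nat, norm1 (fun i => tsa alpha P v y0 c i - ys i)
                     <= vs ^+ c * norm1 (fun i => y0 i - ys i)).
Proof.
move=> rate; have rate_ge0 : 0 <= rate by rewrite !mulr_ge0 ?powR_ge0.
have [ys [[ys_ge0 _] ys_fixed ys_cvg ys_rate]] :=
  iterates_cvg_fixed_point rate_ge0 hvs (@tsa_domain_closed R k n alpha)
    (tsa_step_domain hk hP hv ha0 ha1) (tsa_step_contraction hk hP hv ha0 ha1)
    (y := tsa alpha P v y0) (conj hy0 hy0s) (fun c => erefl).
by exists ys; split; [|split; [exact: tsa_fixed_point_mlppr|]].
Qed.
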